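(* The algebra $\mathcal{S}$ is a quasimodular algebra. More precisely, for every $n\ge1$ and all positive even integers $k_1,\dots,k_n$, $$\langle S_{k_1}S_{k_2}\cdots S_{k_n}\rangle_q=\sum_{\alpha\in\Pi(n)}\prod_{A\in\alpha}D^{|A|-1}G_{k_A-2|A|+2},\qquad k_A:=\sum_{a\in A}k_a .$$
   Context: Partitions $\lambda=(\lambda_1\ge\lambda_2\ge\dots)$, $|\lambda|=\sum\lambda_i$, $\mathscr{P}$ the set of all partitions. For $f:\mathscr{P}\to\mathbb{Q}$, $\langle f\rangle_q=\frac{\sum_\lambda f(\lambda)q^{|\lambda|}}{\sum_\lambda q^{|\lambda|}}\in\mathbb{Q}[[q]]$. For even $k\ge2$, $S_k(\lambda)=-\frac{B_k}{2k}+\sum_i\lambda_i^{k-1}$ ($B_k$ Bernoulli numbers), and $\mathcal{S}$ is the algebra generated by these under the pointwise product, graded by giving $S_{k_1}\cdots S_{k_n}$ weight $\sum k_i$. A quasimodular algebra is a graded space of functions $\mathscr{P}\to\mathbb{Q}$ such that the $q$-bracket of every homogeneous element of weight $k$ is a quasimodular form of weight $k$ for $\mathrm{SL}_2(\mathbb{Z})$. $G_k=-\frac{B_k}{2k}+\sum_{m,r\ge1}m^{k-1}q^{mr}$ ($k\ge2$ even) are Eisenstein series and $D=q\frac{d}{dq}$. $\Pi(n)$ is the set of set partitions of $\{1,\dots,n\}$ (each $\alpha\in\Pi(n)$ is a set of disjoint nonempty blocks $A$ with union $\{1,\dots,n\}$). *)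

From mathcomp Require Import all_boot all_order all_algebra.
Set Implicit Arguments. Unset Strict Implicit. Unset Printing Implicit Defensive.
Import Order.TTheory GRing.Theory Num.Theory.
Local Open Scope ring_scope.

Fixpoint bernoulli_seq (m : nat) : seq rat :=
  match m with
  | 0%N => [:: 1]
  | m'.+1 => let s := bernoulli_seq m' in
      rcons s (- (\sum_(j < m'.+1) ('C(m'.+2, j))%:R * nth 0 s j) / (m'.+2)%:R)
  end.
Definition bernoulli (m : nat) : rat := nth 0 (bernoulli_seq m) m.

Definition fps := nat -> rat.
Definition fzero : fps := fun _ => 0.
Definition fone : fps := fun N => if N == 0%N then 1 else 0.
Definition fadd (a b : fps) : fps := fun N => a N + b N.
Definition fmul (a b : fps) : fps := fun N => \sum_(i < N.+1) a i * b (N - i)%N.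
Fixpoint finv_seq (a : fps) (N : nat) : seq rat :=
  match N with
  | 0%N => [:: (a 0%N)^-1]
  | N'.+1 => let s := finv_seq a N' in
      rcons s (- (\sum_(i < N'.+1) a i.+1 * nth 0 s (N' - i)%N) / a 0%N)
  end.
Definition finv (a : fps) : fps := fun N => nth 0 (finv_seq a N) N.
(* D = q d/dq *)
Definition Dq (a : fps) : fps := fun N => N%:R * a N.

Definition is_partition (l : seq nat) : bool :=
  sorted geq l && all (fun x => 0 < x)%N l.
Definition psize (l : seq nat) : nat := sumn l.

(* sum of f over all partitions of N; a partition of N is encoded (bijectively)
   as a nonincreasing N-tuple of entries in {0..N} with sum N, padded by zeros. *)
Definition sum_partitions (N : nat) (f : seq nat -> rat) : rat :=
  \sum_(t : N.-tuple 'I_N.+1 |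
          sorted geq (map val t) && (sumn (map val t) == N))
     f [seq x <- map val t | (0 < x)%N].

Definition qnum (f : seq nat -> rat) : fps := fun N => sum_partitions N f.
Definition qbracket (f : seq nat -> rat) : fps :=
  fmul (qnum f) (finv (qnum (fun _ => 1))).

Definition S_fun (k : nat) (l : seq nat) : rat :=
  - bernoulli k / (2 * k)%:R + \sum_(x <- l) (x ^ k.-1)%:R.

Definition Gk (k : nat) : fps := fun N =>
  if N == 0%N then - bernoulli k / (2 * k)%:R
  else \sum_(m < N.+1 | (0 < m)%N && (m %| N)%N) (m ^ k.-1)%:R.

(* Write S_k(λ) = -B_k/(2k) + Σ_{r ≥ 1} m_r(λ) r^(k-1), where m_r(λ) is the
   multiplicity of r in λ.  For a symmetric g, splitting off a run of j copies
   of r gives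
     Σ_{λ ⊢ N} m_r(λ) g(λ) = Σ_{j ≥ 1} Σ_{μ ⊢ N - jr} g(r^j μ),
   and S_k(r^j μ) = j r^(k-1) + S_k(μ).  Expanding Π_{i ∈ J} S_{k_i}(r^j μ)
   according to the set B ⊆ J of factors that take the term j r^(k_i - 1), and
   summing over the divisors r of M = jr, produces M^|B| σ_{c-1}(M) with
   c = k_x + k_B - 2|B|, i.e. the M-th coefficient of D^|B| G_c.  Hence the
   numerators N_I = Σ_λ Π_{i ∈ I} S_{k_i}(λ) q^|λ| satisfy
     N_{{x} ∪ J} = Σ_{B ⊆ J} D^|B| G_{k_x + k_B - 2|B|} · N_{J \ B},
   which is also the recursion satisfied by the sum over set partitions of I
   when the block {x} ∪ B containing x is split off.  By induction on |I|,
   N_I = N_∅ · Σ_{α ∈ Π(I)} Π_{A ∈ α} D^(|A|-1) G_{k_A - 2|A| + 2}, and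
   N_∅ = Σ_λ q^|λ| is invertible. *)

From Pilot Require Import Defs.
From HB Require Import structures.
From mathcomp Require Import all_boot all_order all_algebra.
From mathcomp Require Import boolp zify ring.
Set Implicit Arguments. Unset Strict Implicit. Unset Printing Implicit Defensive.
Import GRing.Theory.
Local Open Scope ring_scope.

(** * The ring of formal power series *)

HB.instance Definition _ := Choice.on fps.

Definition fopp (a : fps) : fps := fun N => - a N.

Lemma faddA : associative fadd.
Proof. by move=> a b c; apply: funext => N; rewrite /fadd addrA. Qed.

Lemma faddC : commutative fadd.
Proof. by move=> a b; apply: funext => N; rewrite /fadd addrC. Qed.

Lemma fadd0l : left_id fzero fadd.
Proof. by move=> a; apply: funext => N; rewrite /fadd add0r. Qed.

Lemma faddNl : left_inverse fzero fopp fadd.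
Proof. by move=> a; apply: funext => N; rewrite /fadd addNr. Qed.

HB.instance Definition _ := GRing.isZmodule.Build fps faddA faddC fadd0l faddNl.

(* The first [M + 1] coefficients of a product only depend on the first
   [M + 1] coefficients of the factors, so the ring laws of [fmul] are
   inherited from [{poly rat}]. *)
Definition fps_trunc (a : fps) (M : nat) : {poly rat} := \poly_(i < M.+1) a i.

Lemma coef_fps_trunc a M i : (i <= M)%N -> (fps_trunc a M)`_i = a i.
Proof. by move=> iM; rewrite coef_poly ltnS iM. Qed.

Lemma fmul_trunc a b M N :
  (N <= M)%N -> fmul a b N = (fps_trunc a M * fps_trunc b M)`_N.
Proof.
move=> NM; rewrite coefM; apply: eq_bigr => i _.
by rewrite !coef_fps_trunc //; have := ltn_ord i; lia.
Qed.

Lemma fmulA : associative fmul.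
Proof.
move=> a b c; apply: funext => N; have iN (i : 'I_N.+1) : (i <= N)%N := ltn_ord i.
have -> : fmul a (fmul b c) N =
    (fps_trunc a N * (fps_trunc b N * fps_trunc c N))`_N.
  rewrite coefM; apply: eq_bigr => i _.
  by rewrite (coef_fps_trunc _ (iN i)) (fmul_trunc _ _ (leq_subr i N)).
rewrite mulrA coefM; apply: eq_bigr => i _.
by rewrite (coef_fps_trunc _ (leq_subr i N)) (fmul_trunc _ _ (iN i)).
Qed.

Lemma fmulC : commutative fmul.
Proof. by move=> a b; apply: funext => N; rewrite !(fmul_trunc _ _ (leqnn N)) mulrC. Qed.

Lemma fmul1l : left_id fone fmul.
Proof.
move=> a; apply: funext => N; rewrite /fmul big_ord_recl /= /fone eqxx mul1r subn0.
by rewrite big1 ?addr0 // => i _; rewrite mul0r.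
Qed.

Lemma fmulDl : left_distributive fmul fadd.
Proof.
move=> a b c; apply: funext => N; rewrite /fmul /fadd -big_split /=.
by apply: eq_bigr => i _; rewrite mulrDl.
Qed.

Lemma fone_neq0 : fone != fzero.
Proof. by apply/eqP => /(congr1 (fun f => f 0%N)); rewrite /fone /fzero /=; apply/eqP. Qed.

HB.instance Definition _ :=
  GRing.Zmodule_isComNzRing.Build fps fmulA fmulC fmul1l fmulDl fone_neq0.

Lemma fps_sumE (I : Type) (r : seq I) (P : pred I) (F : I -> fps) N :
  (\sum_(i <- r | P i) F i) N = \sum_(i <- r | P i) F i N.
Proof. exact: (big_morph (fun f : fps => f N)). Qed.

Lemma fps_mulE (a b : fps) N :
  (a * b) N = a 0%N * b N + \sum_(1 <= i < N.+1) a i * b (N - i)%N.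
Proof.
transitivity (\sum_(i < N.+1) a i * b (N - i)%N); first by [].
by rewrite -(big_mkord xpredT (fun i => a i * b (N - i)%N)) big_ltn // subn0.
Qed.

Lemma size_finv_seq a N : size (finv_seq a N) = N.+1.
Proof. by elim: N => [|N IH] //=; rewrite size_rcons IH. Qed.

Lemma nth_finv_seq a N i : (i <= N)%N -> nth 0 (finv_seq a N) i = Defs.finv a i.
Proof.
elim: N => [|N IH]; first by rewrite leqn0 => /eqP ->.
rewrite leq_eqVlt => /predU1P [-> //| iN].
by rewrite /= nth_rcons size_finv_seq iN IH.
Qed.

Lemma fps_mulV (a : fps) : a 0%N != 0 -> a * Defs.finv a = 1.
Proof.
move=> a0; apply: funext => -[|N].
  by rewrite /GRing.mul /= /fmul big_ord1 /Defs.finv /= mulfV.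
rewrite /GRing.mul /= /fmul big_ord_recl /= subn0.
rewrite {1}/Defs.finv /= nth_rcons size_finv_seq ltnn eqxx.
rewrite [X in _ + X](eq_bigr (fun i : 'I_N.+1 => a i.+1 * nth 0 (finv_seq a N) (N - i)));
  last first.
  by move=> i _; rewrite nth_finv_seq ?leq_subr //; congr (_ * Defs.finv a _); exact: subSS.
by rewrite mulrCA mulfV // mulr1 addNr.
Qed.

Lemma iter_DqE m a N : iter m Dq a N = (N ^ m)%:R * a N.
Proof.
elim: m => [|m IH] /=; first by rewrite mul1r.
by rewrite /Dq IH mulrA -natrM expnSr mulnC.
Qed.

(** * Partitions of an integer *)

Lemma geq_trans : transitive geq. Proof. exact: rev_trans leq_trans. Qed.
Lemma geq_anti : antisymmetric geq. Proof. by move=> m n /andP[? ?]; apply/anti_leq/andP. Qed.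
Lemma geq_total : total geq. Proof. by move=> m n; rewrite /= orbC leq_total. Qed.

Definition partition_of (N : nat) (l : seq nat) := is_partition l && (sumn l == N).

Lemma partition_of_sorted N l : partition_of N l -> sorted geq l.
Proof. by case/andP => /andP[]. Qed.

Lemma mem_leq_sumn (l : seq nat) x : x \in l -> (x <= sumn l)%N.
Proof. by elim: l => //= y l IH; rewrite in_cons => /predU1P[->|/IH]; lia. Qed.

Definition strip0 (s : seq nat) := [seq x <- s | (0 < x)%N].

Lemma sumn_strip0 s : sumn (strip0 s) = sumn s.
Proof. by elim: s => //= -[|x] s IH //=; rewrite IH. Qed.

Lemma sorted_strip0K s :
  sorted geq s -> strip0 s ++ nseq (size s - size (strip0 s)) 0%N = s.
Proof.
elim: s => //= -[|x] s IH s_sorted; last by rewrite subSS /= IH // (path_sorted s_sorted).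
have /all_pred1P -> : all (pred1 0%N) s.
  by apply: sub_all (order_path_min geq_trans s_sorted) => y; rewrite /= leqn0.
by rewrite /strip0 /= filter_nseq /= size_nseq.
Qed.

Lemma path_nseq0 x m : path geq x (nseq m 0%N).
Proof. by elim: m x => //= m IH x; rewrite IH andbT. Qed.

(* [sum_partitions] runs over partitions padded with zeros to nonincreasing
   [N]-tuples; [partitions N] lists them with the padding stripped. *)
Definition padded_partition N :=
  [pred t : N.-tuple 'I_N.+1 | sorted geq (map val t) && (sumn (map val t) == N)].

Definition partitions N : seq (seq nat) :=
  [seq strip0 (map val t) | t : N.-tuple 'I_N.+1 <- enum (padded_partition N)].

Lemma sum_partitionsE N (f : seq nat -> rat) :
  sum_partitions N f = \sum_(l <- partitions N) f l.
Proof. by rewrite big_map big_enum. Qed.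

Lemma partitions_uniq N : uniq (partitions N).
Proof.
rewrite map_inj_in_uniq ?enum_uniq // => t1 t2.
rewrite !mem_enum => /andP[sorted1 _] /andP[sorted2 _] eq_strip.
apply/val_inj/(inj_map val_inj).
by rewrite -(sorted_strip0K sorted1) -(sorted_strip0K sorted2) eq_strip !size_map !size_tuple.
Qed.

Lemma partition_of_strip0 N t :
  padded_partition N t -> partition_of N (strip0 (map val t)).
Proof.
case/andP => t_sorted /eqP t_sum.
rewrite /partition_of /is_partition sumn_strip0 t_sum eqxx andbT.
by rewrite sorted_filter ?t_sorted //= ?filter_all //; exact: geq_trans.
Qed.

Lemma pad_partition_of N l : partition_of N l ->
  exists2 t, padded_partition N t & strip0 (map val t) = l.
Proof.
case/andP => /andP[l_sorted l_pos] /eqP l_sum.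
have size_l : (size l <= N)%N.
  by rewrite -l_sum; elim: l l_pos {l_sorted l_sum} => //= x l IH /andP[x0 /IH]; lia.
pose s := l ++ nseq (N - size l) 0%N.
have size_s : size (map (@inord N) s) == N by rewrite size_map size_cat size_nseq subnKC.
have val_s : map val (Tuple size_s) = s.
  rewrite /= -map_comp -[RHS]map_id; apply/eq_in_map => x; rewrite mem_cat.
  case/orP => [xl | /nseqP[-> _]]; rewrite /= inordK //.
  by rewrite ltnS -l_sum mem_leq_sumn.
exists (Tuple size_s); last first.
  by rewrite val_s /strip0 filter_cat (all_filterP l_pos) filter_nseq /= cats0.
rewrite /= val_s sumn_cat l_sum sumn_nseq mul0n addn0 eqxx andbT.
rewrite /s; case: l l_sorted {l_pos l_sum size_l s size_s val_s} => [|x l] l_sorted.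
  by case: (N - 0)%N => //= m; apply: path_nseq0.
by rewrite /= cat_path path_nseq0 andbT.
Qed.

Lemma mem_partitions N l : (l \in partitions N) = partition_of N l.
Proof.
apply/mapP/idP => [[t] | /pad_partition_of[t t_pad <-]].
  by rewrite mem_enum => /partition_of_strip0 + ->.
by exists t; rewrite ?mem_enum.
Qed.

Definition partition_gf : fps := qnum (fun _ => 1).

Lemma partition_gf0 : partition_gf 0%N = 1.
Proof.
rewrite /partition_gf /qnum sum_partitionsE (perm_big [:: [::]]) ?big_seq1 //.
apply: uniq_perm; rewrite ?partitions_uniq // => l; rewrite mem_partitions inE.
apply/idP/eqP => [| -> //]; case: l => // x l /andP[/andP[_ /andP[x0 _]]] /=; lia.
Qed.

(** * Multiplicities of parts *)

Definition perm_invariant (h : seq nat -> rat) :=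
  forall s1 s2, perm_eq s1 s2 -> h s1 = h s2.

Lemma perm_partitions_mem N r : (0 < r)%N -> (r <= N)%N ->
  perm_eq [seq l <- partitions N | r \in l]
          [seq sort geq (r :: m) | m <- partitions (N - r)].
Proof.
move=> r0 rN; have sort_perm s : perm_eq (sort geq s) s by apply/permPl/perm_sort.
apply: uniq_perm; first by rewrite filter_uniq // partitions_uniq.
  rewrite map_inj_in_uniq ?partitions_uniq // => m1 m2.
  rewrite !mem_partitions => /partition_of_sorted m1_sorted /partition_of_sorted m2_sorted.
  move/perm_sortP => /(_ geq_total geq_trans geq_anti); rewrite perm_cons.
  exact: (sorted_eq geq_trans geq_anti m1_sorted m2_sorted).
move=> l; rewrite mem_filter mem_partitions; apply/andP/mapP => [[rl l_part] | [m]].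
  case/andP: (l_part) => /andP[l_sorted l_pos] /eqP l_sum.
  exists (rem r l).
    rewrite mem_partitions /partition_of /is_partition.
    rewrite (subseq_sorted geq_trans (rem_subseq r l) l_sorted) /=.
    apply/andP; split; first by apply/allP => x /mem_rem /(allP l_pos).
    by rewrite -l_sum (perm_sumn (perm_to_rem rl)) /=; apply/eqP; lia.
  apply: (sorted_eq geq_trans geq_anti l_sorted (sort_sorted geq_total _)).
  by rewrite perm_sym (perm_trans (sort_perm _)) // perm_sym perm_to_rem.
rewrite mem_partitions => /andP[/andP[m_sorted m_pos] /eqP m_sum] ->.
rewrite mem_sort mem_head /partition_of /is_partition (sort_sorted geq_total) /=.
rewrite (perm_all _ (sort_perm _)) (perm_sumn (sort_perm _)) /= r0 m_pos m_sum.
by split=> //; apply/eqP; lia.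
Qed.

Lemma sum_partitions_mem N r (h : seq nat -> rat) :
  (0 < r)%N -> (r <= N)%N -> perm_invariant h ->
  \sum_(l <- partitions N | r \in l) h l = \sum_(m <- partitions (N - r)) h (r :: m).
Proof.
move=> r0 rN h_perm; rewrite -big_filter (perm_big _ (perm_partitions_mem r0 rN)) big_map.
by apply: eq_bigr => m _; apply/h_perm/permPl/perm_sort.
Qed.

(* Strong induction on [N]: removing one part [r] from [l] lowers
   [count_mem r l] by one, and the removed parts add up to [M]. *)
Lemma sum_partitions_count N r (g : seq nat -> rat) :
  (0 < r)%N -> perm_invariant g ->
  \sum_(l <- partitions N) (count_mem r l)%:R * g l =
  \sum_(1 <= M < N.+1 | (r %| M)%N) \sum_(m <- partitions (N - M)) g (nseq (M %/ r) r ++ m).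
Proof.
move=> r0; elim/ltn_ind: N g => N IH g g_perm.
have [Nr | rN] := ltnP N r.
  rewrite [RHS]big_nat_cond [RHS]big1 => [|M /andP[/andP[M1 MN] rM]]; last first.
    by have := dvdn_leq M1 rM; lia.
  rewrite big1_seq // => l /andP[_]; rewrite mem_partitions => /andP[_ /eqP l_sum].
  suff /count_memPn -> : r \notin l by rewrite mul0r.
  by apply/negP => /mem_leq_sumn; lia.
rewrite (bigID (fun l => r \in l)) /= [X in _ + X]big1 ?addr0; last first.
  by move=> l /count_memPn ->; rewrite mul0r.
rewrite sum_partitions_mem //; last by move=> s1 s2 s12; rewrite (permP s12) (g_perm _ _ s12).
rewrite (eq_bigr (fun m => (count_mem r m)%:R * g (r :: m) + g (r :: m))); last first.
  by move=> m _; rewrite /= eqxx add1n -addn1 natrD mulrDl mul1r.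
rewrite big_split /= addrC IH; [|lia | by move=> s1 s2 s12; apply/g_perm; rewrite perm_cons].
rewrite [RHS](@big_cat_nat _ _ _ r) //; last exact: leqW.
rewrite [X in _ = _ + X]big_ltn_cond // dvdnn divnn r0 /=.
rewrite [X in _ = X + _]big_nat_cond [X in _ = X + _]big1 ?add0r; last first.
  by move=> M /andP[/andP[M1 Mr] rM]; have := dvdn_leq M1 rM; lia.
congr (_ + _); rewrite -[r.+1]add1n big_addn subSn //.
apply: eq_big => [M | M _]; first by rewrite dvdn_addl.
by rewrite divnDr ?dvdnn // divnn r0 addn1 addnC subnDA.
Qed.

Lemma sum_seq_count N (s : seq nat) (F : nat -> rat) : all (fun y => y < N.+1)%N s ->
  \sum_(y <- s) F y = \sum_(0 <= r < N.+1) (count_mem r s)%:R * F r.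
Proof.
elim: s => [_ | y s IH /andP[yN /IH IHs]].
  by rewrite big_nil big1 // => r _; rewrite mul0r.
under [RHS]eq_bigr => r _ do rewrite /= natrD mulrDl.
rewrite big_split big_cons IHs /=; congr (_ + _).
rewrite big_mkord (bigD1 (Ordinal yN)) //= eqxx mul1r.
by rewrite big1 ?addr0 // => r; rewrite -val_eqE /= eq_sym => /negbTE ->; rewrite mul0r.
Qed.

Lemma sum_partitions_power_sum N a (g : seq nat -> rat) :
  (0 < a)%N -> perm_invariant g ->
  \sum_(l <- partitions N) (\sum_(y <- l) (y ^ a)%:R) * g l =
  \sum_(1 <= M < N.+1) \sum_(1 <= r < N.+1 | (r %| M)%N)
     (r ^ a)%:R * \sum_(m <- partitions (N - M)) g (nseq (M %/ r) r ++ m).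
Proof.
move=> a0 g_perm.
transitivity (\sum_(1 <= r < N.+1)
                (r ^ a)%:R * \sum_(l <- partitions N) (count_mem r l)%:R * g l).
  under [RHS]eq_bigr => r _ do rewrite big_distrr.
  rewrite [RHS]exchange_big /=; apply: eq_big_seq => l.
  rewrite mem_partitions => /andP[_ /eqP l_sum].
  rewrite (@sum_seq_count N) ?big_distrl; last by apply/allP => y /mem_leq_sumn; lia.
  rewrite big_ltn //= exp0n // mulr0 mul0r add0r.
  by apply: eq_bigr => r _; rewrite mulrAC mulrC.
under eq_big_nat => r /andP[r1 _] do rewrite sum_partitions_count // big_distrr.
under eq_bigr => r _ do rewrite big_mkcond.
by rewrite exchange_big; apply: eq_bigr => M _; rewrite [RHS]big_mkcond.
Qed.

(** * Sums over set partitions *)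

Section SetPartitionSums.
Variables (T : finType) (R : comNzRingType).
Implicit Types (I C : {set T}) (P : {set {set T}}).

Lemma partition_setU1 P I C : C \subset I -> C != set0 -> C \notin P ->
  partition (C |: P) I = partition P (I :\: C).
Proof.
move=> CI C0 CP; apply/idP/idP => [/partitionD1 | P_part].
  by move=> /(_ C (setU11 C P)); rewrite setU1K.
rewrite -{1}(setID I C) (setIidPr CI); apply: partitionU1 => //.
by rewrite -setI_eq0 setDE setICA setICr setI0.
Qed.

Variable w : {set T} -> R.

Definition partition_sum I : R :=
  \sum_(P : {set {set T}} | partition P I) \prod_(A in P) w A.

Lemma partition_sum0 : partition_sum set0 = 1.
Proof.
rewrite /partition_sum (eq_bigl (pred1 set0)) => [|P]; last by rewrite partition_set0.
by rewrite big_pred1_eq big_set0.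
Qed.

(* Group the set partitions of [I] by the block [x |: B] containing [x];
   removing that block is a bijection onto the set partitions of [I :\: (x |: B)]. *)
Lemma partition_sum_pblock I x : x \in I ->
  partition_sum I =
  \sum_(B : {set T} | B \subset I :\ x) w (x |: B) * partition_sum (I :\ x :\: B).
Proof.
move=> xI; rewrite /partition_sum.
rewrite (partition_big (fun P => pblock P x :\ x) (fun B => B \subset I :\ x)); last first.
  move=> P P_part; apply/setSD/(partitionS P_part)/pblock_mem.
  by rewrite (cover_partition P_part).
apply: eq_bigr => B BIx; set C := x |: B.
have xC : x \in C by rewrite setU11.
have xB : x \notin B by apply: contraTN BIx => xB; apply/subsetPn; exists x; rewrite ?setD11.
have CI : C \subset I by rewrite subUset sub1set xI (subset_trans BIx) ?subD1set.
have C0 : C != set0 by apply/set0Pn; exists x.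
rewrite setDDl -/C big_distrr /= (reindex_onto (fun P => C |: P) (fun P => P :\ C)); last first.
  move=> P /andP[P_part /eqP PxB]; have xP : x \in cover P by rewrite (cover_partition P_part).
  have -> : C = pblock P x by rewrite /C -PxB setD1K ?mem_pblock.
  by rewrite setD1K ?pblock_mem.
apply: eq_big => [P | P /andP[_ /eqP PC]]; last by rewrite big_setU1 //= -PC setD11.
have [CP | CP] := boolP (C \in P).
  have -> : ((C |: P) :\ C == P) = false.
    by apply/negbTE/eqP => PC; move: CP; rewrite -PC setD11.
  rewrite andbF; apply/esym/negbTE/negP => /partitionS /(_ CP) /subsetP /(_ x xC).
  by rewrite inE xC.
rewrite setU1K // eqxx andbT partition_setU1 //; apply/andb_idr => P_part.
have CP_part : partition (C |: P) I by rewrite partition_setU1.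
by rewrite (def_pblock (partition_trivIset CP_part) (setU11 C P) xC) setU1K.
Qed.

End SetPartitionSums.

(** * The recursion for the numerators *)

Lemma prodrD_subsets (R : comNzRingType) (I : finType) (J : {set I}) (F G : I -> R) :
  \prod_(i in J) (F i + G i) =
  \sum_(B : {set I} | B \subset J) \prod_(i in B) F i * \prod_(i in J :\: B) G i.
Proof.
pose FJ i := if i \in J then F i else 0; pose GJ i := if i \in J then G i else 1.
have -> : \prod_(i in J) (F i + G i) = \prod_i (FJ i + GJ i).
  rewrite big_mkcond; apply: eq_bigr => i _.
  by rewrite /FJ /GJ; case: (i \in J); rewrite ?add0r.
rewrite bigA_distr (bigID (fun B : {set I} => B \subset J)) /=.
rewrite [X in _ + X]big1 ?addr0; last first.
  by move=> B /subsetPn[i iB iJ]; rewrite (bigD1 i) //= iB /FJ (negbTE iJ) mul0r.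
apply: eq_bigr => B BJ; rewrite (bigID (mem B)) /=; congr (_ * _).
  by apply: eq_big => [i | i iB]; rewrite ?iB /FJ ?(subsetP BJ i iB) ?andbT.
rewrite big_mkcond [RHS]big_mkcond; apply: eq_bigr => i _.
by rewrite /GJ !inE; case: (i \in B); case: (i \in J).
Qed.

Lemma perm_invariant_S k : perm_invariant (S_fun k).
Proof. by move=> s1 s2 s12; rewrite /S_fun (perm_big _ s12). Qed.

Lemma S_fun_nseq_cat k j r m : S_fun k (nseq j r ++ m) = (j * r ^ k.-1)%:R + S_fun k m.
Proof.
rewrite /S_fun big_cat /= addrCA; congr (_ + _).
by elim: j => [|j IH]; rewrite ?big_nil ?mul0n // big_cons IH mulSn natrD.
Qed.

(* Each divisor [r] of [M] contributes [r ^ a * (M %/ r) ^ #|B| * r ^ (\sum_B e)],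
   which is [M ^ #|B| * r ^ c.-1]. *)
Lemma iter_Dq_Gk_divisors (I : finType) (B : {set I}) (e : I -> nat) a c M N :
  (0 < M)%N -> (M <= N)%N -> (c.-1 + #|B| = a + \sum_(i in B) e i)%N ->
  \sum_(1 <= r < N.+1 | (r %| M)%N) (r ^ a)%:R * \prod_(i in B) ((M %/ r) * r ^ e i)%:R =
  iter #|B| Dq (Gk c) M.
Proof.
move=> M0 MN hc; rewrite iter_DqE /Gk; case: M M0 MN => // M _ MN /=.
rewrite mulr_sumr -(@big_mkord _ 0 +%R M.+2 (fun m => (0 < m)%N && (m %| M.+1)%N)
  (fun m => (M.+1 ^ #|B|)%:R * (m ^ c.-1)%:R)).
rewrite [RHS](big_nat_widen _ _ _ _ _ (_ : M.+2 <= N.+1)%N) // [RHS]big_ltn_cond //=.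
rewrite big_nat_cond [RHS]big_nat_cond; apply: eq_big => [r | r /andP[_ rM]].
  rewrite andbC; case: r => // r; case: (boolP (r.+1 %| M.+1)%N) => rM; rewrite ?andbF //=.
  by rewrite andb_idr // => _; rewrite ltnS dvdn_leq.
rewrite -natr_prod -!natrM big_split /= prod_nat_const -expn_sum.
by rewrite -{2}(divnK rM) expnMn mulnCA -expnD -hc expnD; congr (_%:R); ring.
Qed.

Section Numerators.
Variables (n : nat) (k : 'I_n -> nat).
Hypothesis k_ge2 : forall i, (2 <= k i)%N.
Implicit Types (x : 'I_n) (B J : {set 'I_n}).

Definition S_prod J (l : seq nat) : rat := \prod_(i in J) S_fun (k i) l.

Definition block_weight (A : {set 'I_n}) : fps :=
  iter #|A|.-1 Dq (Gk ((\sum_(a in A) k a) + 2 - 2 * #|A|)%N).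

Lemma perm_invariant_S_prod J : perm_invariant (S_prod J).
Proof. by move=> s1 s2 s12; apply: eq_bigr => i _; apply: perm_invariant_S. Qed.

Lemma S_prod_nseq_cat J j r m :
  S_prod J (nseq j r ++ m) =
  \sum_(B : {set 'I_n} | B \subset J) \prod_(i in B) (j * r ^ (k i).-1)%:R * S_prod (J :\: B) m.
Proof. by rewrite /S_prod -prodrD_subsets; apply: eq_bigr => i _; apply: S_fun_nseq_cat. Qed.

Lemma S_prod0 : S_prod set0 = fun _ => 1.
Proof. by apply: funext => l; rewrite /S_prod big_set0. Qed.

Lemma sum_k_ge B : (2 * #|B| <= \sum_(i in B) k i)%N.
Proof. by rewrite -sum1_card big_distrr /=; apply: leq_sum => i _; rewrite muln1. Qed.

Lemma sum_k_pred B : (\sum_(i in B) (k i).-1 + #|B| = \sum_(i in B) k i)%N.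
Proof.
rewrite -sum1_card -big_split /=; apply: eq_bigr => i _.
by rewrite addn1 prednK // (leq_trans _ (k_ge2 i)).
Qed.

Lemma block_weightU1 x B : x \notin B ->
  block_weight (x |: B) = iter #|B| Dq (Gk (k x + \sum_(i in B) k i - 2 * #|B|)%N).
Proof.
move=> xB; rewrite /block_weight cardsU1 xB big_setU1 //=.
by congr (iter _ Dq (Gk _)); have := sum_k_ge B; lia.
Qed.

Lemma sum_block_weightU1_coef0 x J N : x \notin J ->
  \sum_(B : {set 'I_n} | B \subset J) block_weight (x |: B) 0%N * qnum (S_prod (J :\: B)) N =
  \sum_(l <- partitions N) - bernoulli (k x) / (2 * k x)%:R * S_prod J l.
Proof.
move=> xJ; rewrite (bigD1 set0) ?sub0set //= big1 ?addr0 => [|B /andP[BJ B0]].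
  rewrite block_weightU1 ?in_set0 // setD0 cards0 big_set0 /= addn0 muln0 subn0.
  by rewrite /qnum sum_partitionsE mulr_sumr.
have xB : x \notin B by apply: contra xJ; apply: subsetP.
by rewrite block_weightU1 // iter_DqE exp0n ?mul0r // card_gt0.
Qed.

Lemma sum_block_weightU1_coef x J N : x \notin J ->
  \sum_(B : {set 'I_n} | B \subset J) \sum_(1 <= M < N.+1)
     block_weight (x |: B) M * qnum (S_prod (J :\: B)) (N - M)%N =
  \sum_(l <- partitions N) (\sum_(y <- l) (y ^ (k x).-1)%:R) * S_prod J l.
Proof.
move=> xJ; have kx_gt1 : (0 < (k x).-1)%N by have := k_ge2 x; lia.
rewrite sum_partitions_power_sum //; last exact: perm_invariant_S_prod.
rewrite exchange_big /=; apply: eq_big_nat => M /andP[M1 MN]; symmetry.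
transitivity (\sum_(B : {set 'I_n} | B \subset J)
  (\sum_(1 <= r < N.+1 | (r %| M)%N)
     (r ^ (k x).-1)%:R * \prod_(i in B) ((M %/ r) * r ^ (k i).-1)%:R)
  * qnum (S_prod (J :\: B)) (N - M)%N).
  under [RHS]eq_bigr => B _ do rewrite mulr_suml.
  rewrite [RHS]exchange_big /=; apply: eq_bigr => r _.
  under eq_bigr => m _ do rewrite S_prod_nseq_cat.
  rewrite exchange_big mulr_sumr; apply: eq_bigr => B _.
  by rewrite /qnum sum_partitionsE -mulrA -mulr_sumr.
apply: eq_bigr => B BJ; have xB : x \notin B by apply: contra xJ; apply: subsetP.
rewrite block_weightU1 //; congr (_ * _).
apply: (iter_Dq_Gk_divisors (e := fun i => (k i).-1)) => //=.
(* The sums live in the semiring [nat], which [lia] does not see through. *)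
have arith (a b s t : nat) : (2 <= a)%N -> (2 * b <= s)%N -> (t + b = s)%N ->
  ((a + s - 2 * b).-1 + b = a.-1 + t)%N by lia.
exact: arith (k_ge2 x) (sum_k_ge B) (sum_k_pred B).
Qed.

Lemma qnum_S_prodU1 x J : x \notin J ->
  qnum (S_prod (x |: J)) =
  \sum_(B : {set 'I_n} | B \subset J) block_weight (x |: B) * qnum (S_prod (J :\: B)).
Proof.
move=> xJ; apply: funext => N; rewrite fps_sumE.
under [RHS]eq_bigr => B _ do rewrite fps_mulE.
rewrite big_split /= sum_block_weightU1_coef0 // sum_block_weightU1_coef //.
rewrite /qnum sum_partitionsE -big_split /=; apply: eq_bigr => l _.
by rewrite /S_prod big_setU1 //= /S_fun mulrDl.
Qed.

Lemma qnum_S_prod I : qnum (S_prod I) = partition_gf * partition_sum block_weight I.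
Proof.
move: {2}#|I| (erefl #|I|) => m; elim/ltn_ind: m I => m IH I cardI.
have [-> | [x xI]] := set_0Vmem I; first by rewrite S_prod0 partition_sum0 mulr1.
rewrite -{1}(setD1K xI) qnum_S_prodU1 ?setD11 // (partition_sum_pblock _ xI) mulr_sumr.
apply: eq_bigr => B _; rewrite (IH _ _ _ erefl); first exact: mulrCA.
rewrite -cardI (cardsD1 x I) xI ltnS.
exact/subset_leq_card/subsetDl.
Qed.

End Numerators.

Theorem theorem3p3p1 (n : nat) (k : 'I_n -> nat) :
  (1 <= n)%N ->
  (forall i, (0 < k i)%N /\ ~~ odd (k i)) ->
  forall N : nat,
    qbracket (fun l => \prod_(i < n) S_fun (k i) l) N =
    (\big[fadd/fzero]_(alpha : {set {set 'I_n}} | partition alpha [set: 'I_n])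
       \big[fmul/fone]_(A in alpha)
          iter (#|A|.-1) Dq
            (Gk ((\sum_(a in A) k a) + 2 - 2 * #|A|)%N)) N.
Proof.
move=> _ k_even N.
have k_ge2 i : (2 <= k i)%N by case: (k_even i); case: (k i) => [|[|]].
have -> : (fun l => \prod_(i < n) S_fun (k i) l) = S_prod k setT.
  by apply: funext => l; apply: eq_bigl => i; rewrite inE.
rewrite /qbracket (qnum_S_prod k_ge2) -/(partition_gf).
change ((partition_gf * partition_sum (block_weight k) setT * Defs.finv partition_gf) N =
        partition_sum (block_weight k) setT N).
by rewrite mulrAC fps_mulV ?mul1r // partition_gf0 oner_neq0.
Qed.
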